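(* Let $n\ge1$, $a\in\mathcal{IS}_n$, and consider the semigroup $(\mathcal{IS}_n,*_a)$. Let $x\in\mathcal{IS}_n$. If $\operatorname{dom}(x)\subseteq\operatorname{ran}(a)$, then the $\mathcal{L}$-class of $x$ is $$L_x=\{y\in\mathcal{IS}_n : \operatorname{ran}(y)=\operatorname{ran}(x),\ \operatorname{dom}(y)\subseteq\operatorname{ran}(a)\};$$ otherwise $L_x=\{x\}$.
   Context: $\mathcal{IS}_n$ is the set of all partial injective maps of $N=\{1,\dots,n\}$, including the empty map; $\operatorname{dom}(x)$, $\operatorname{ran}(x)$ denote domain and range. Maps are composed from left to right: $(xy)(i)=y(x(i))$, defined exactly when $i\in\operatorname{dom}(x)$ and $x(i)\in\operatorname{dom}(y)$. For fixed $a\in\mathcal{IS}_n$, $x*_a y:=xay$. Green's relations in a semigroup $S$: with $S^1$ the semigroup $S$ with an identity adjoined, $x\mathcal{L}y$ iff $S^1x=S^1y$, $x\mathcal{R}y$ iff $xS^1=yS^1$, $\mathcal{H}=\mathcal{L}\cap\mathcal{R}$, $\mathcal{D}=\mathcal{L}\circ\mathcal{R}$ (which equals $\mathcal{R}\circ\mathcal{L}$). $L_x,R_x,H_x,D_x$ denote the corresponding classes of $x$, here computed in $(\mathcal{IS}_n,*_a)$. *)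

(* N = {1,...,n} is modelled by the ordinal type 'I_n. *)
From mathcomp Require Import all_boot.
Set Implicit Arguments. Unset Strict Implicit. Unset Printing Implicit Defensive.

Definition pimap (n : nat) := {ffun 'I_n -> option 'I_n}.

Definition isIS n (x : pimap n) : Prop :=
  forall i j k, x i = Some k -> x j = Some k -> i = j.

Definition dom n (x : pimap n) : {set 'I_n} := [set i | x i != None].
Definition ran n (x : pimap n) : {set 'I_n} := [set j | [exists i, x i == Some j]].

(* composition from left to right: (x y)(i) = y (x i) *)
Definition comp n (x y : pimap n) : pimap n :=
  [ffun i => if x i is Some k then y k else None].

(* sandwich product x *_a y = x a y *)
Definition sand n (a x y : pimap n) : pimap n := comp (comp x a) y.

(* membership in S^1 *_a x, the principal left ideal of x in (IS_n, *_a)^1 *)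
Definition inLideal n (a x z : pimap n) : Prop :=
  z = x \/ exists s, isIS s /\ z = sand a s x.

(* Green's L relation in (IS_n, *_a): S^1 x = S^1 y (as subsets of IS_n) *)
Definition Lrel n (a x y : pimap n) : Prop :=
  forall z, isIS z -> (inLideal a x z <-> inLideal a y z).

(* In [IS_n], a partial injection [z] factors as [s w] with [s] injective
   exactly when [ran z \subset ran w].  Since [s *_a x = s (a x)], the
   principal left ideal of [x] in [(IS_n, *_a)^1] is [x] together with the
   maps whose range lies in [ran (a x) = x(ran a \cap dom x)].  The latter
   set equals [ran x] precisely when [dom x \subset ran a]; otherwise it is
   strictly smaller, so no [y <> x] can generate the same left ideal. *)
From Stdlib Require Import Setoid.
From mathcomp Require Import all_boot.
Set Implicit Arguments. Unset Strict Implicit. Unset Printing Implicit Defensive.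

Section PartialInjections.

Variable n : nat.
Implicit Types a s w x y z : pimap n.

Lemma ranP x j : reflect (exists i, x i = Some j) (j \in ran x).
Proof.
rewrite inE; apply: (iffP existsP) => [[i /eqP]|[i xi]]; first by exists i.
by exists i; rewrite xi.
Qed.

Lemma comp_assoc x y z : comp (comp x y) z = comp x (comp y z).
Proof. by apply/ffunP=> i; rewrite !ffunE; case: (x i) => // k; rewrite ffunE. Qed.

Lemma comp_isIS x y : isIS x -> isIS y -> isIS (comp x y).
Proof.
move=> hx hy i j k; rewrite !ffunE.
case ei: (x i) => [l|] //; case ej: (x j) => [m|] // yl ym.
by apply: hx ei _; rewrite ej (hy _ _ _ yl ym).
Qed.

Lemma ran_comp_sub x y : ran (comp x y) \subset ran y.
Proof.
apply/subsetP=> j /ranP [i]; rewrite ffunE.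
by case: (x i) => // k yk; apply/ranP; exists k.
Qed.

Lemma factor_of_ran_sub w z : isIS z -> ran z \subset ran w ->
  exists s, isIS s /\ z = comp s w.
Proof.
move=> hz zw.
pose s : pimap n := [ffun i => if z i is Some j then [pick k | w k == Some j] else None].
have sP i j : z i = Some j -> exists2 k, s i = Some k & w k = Some j.
  move=> zi; have /ranP [k0 wk0] : j \in ran w by apply: (subsetP zw); apply/ranP; exists i.
  rewrite /s ffunE zi; case: pickP => [k /eqP wk|/(_ k0)]; first by exists k.
  by rewrite wk0 eqxx.
have s_none i : z i = None -> s i = None by rewrite /s ffunE => ->.
exists s; split.
  move=> i i' k si si'.
  case zi: (z i) => [j|]; last by rewrite s_none in si.
  case zi': (z i') => [j'|]; last by rewrite s_none in si'.
  have [l sl wl] := sP _ _ zi; have [l' sl' wl'] := sP _ _ zi'.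
  move: sl sl' wl wl'; rewrite si si' => -[<-] [<-] -> [ej].
  by apply: hz zi _; rewrite zi' ej.
apply/ffunP=> i; rewrite ffunE.
case zi: (z i) => [j|]; last by rewrite s_none.
by have [k -> ->] := sP _ _ zi.
Qed.

Lemma ran_comp_full a x : dom x \subset ran a -> ran (comp a x) = ran x.
Proof.
move=> xa; apply/eqP; rewrite eqEsubset ran_comp_sub.
apply/subsetP=> j /ranP [i xi].
have /ranP [k ak] : i \in ran a by apply: (subsetP xa); rewrite inE xi.
by apply/ranP; exists k; rewrite ffunE ak.
Qed.

Lemma dom_sub_of_ran_comp a x : isIS x ->
  ran x \subset ran (comp a x) -> dom x \subset ran a.
Proof.
move=> hx sub; apply/subsetP=> i; rewrite inE; case xi: (x i) => [j|] // _.
have /ranP [k] : j \in ran (comp a x) by apply: (subsetP sub); apply/ranP; exists i.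
rewrite ffunE; case ak: (a k) => [l|] // xl.
by apply/ranP; exists k; rewrite ak (hx _ _ _ xi xl).
Qed.

Lemma inLidealE a x z : isIS z ->
  inLideal a x z <-> z = x \/ ran z \subset ran (comp a x).
Proof.
move=> hz; rewrite /inLideal /sand; split=> -[-> | hs]; [by left | | by left | ].
- by case: hs => s [_ ->]; right; rewrite comp_assoc ran_comp_sub.
- have [s [hs' ->]] := factor_of_ran_sub hz hs.
  by right; exists s; rewrite comp_assoc.
Qed.

Lemma inLideal_trans a x y z : isIS a ->
  inLideal a x y -> inLideal a y z -> inLideal a x z.
Proof.
move=> ha [-> //| [t [ht ->]]] [-> | [s [hs ->]]]; right; first by exists t.
exists (sand a s t); split; first by apply: comp_isIS => //; apply: comp_isIS.
by rewrite /sand !comp_assoc.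
Qed.

Lemma LrelE a x y : isIS a -> isIS x -> isIS y ->
  Lrel a x y <-> inLideal a x y /\ inLideal a y x.
Proof.
move=> ha hx hy; split=> [hL | [xy yx] z hz].
  by split; [apply/(hL y hy) | apply/(hL x hx)]; left.
by split=> [/(inLideal_trans ha yx) | /(inLideal_trans ha xy)].
Qed.

End PartialInjections.

Theorem theorem4 (n : nat) (hn : 1 <= n) (a x : pimap n) :
  isIS a -> isIS x ->
  forall y : pimap n, isIS y ->
    (Lrel a x y <->
     (if dom x \subset ran a
      then ran y = ran x /\ dom y \subset ran a
      else y = x)).
Proof.
move=> ha hx y hy; rewrite LrelE // !inLidealE //.
have yay := ran_comp_sub a y.
case: ifP => xa.
  rewrite (ran_comp_full xa); split=> [[[-> // | yx] [<- // | xy]] | [yx ya]].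
    have ran_yx : ran y = ran x.
      by apply/eqP; rewrite eqEsubset yx (subset_trans xy yay).
    split=> //; apply: dom_sub_of_ran_comp hy _.
    by rewrite ran_yx.
  by rewrite (ran_comp_full ya) yx; split; right.
split=> [[[-> // | yx] [<- // | xy]] | ->]; last by split; left.
have := dom_sub_of_ran_comp hx (subset_trans xy (subset_trans yay yx)).
by rewrite xa.
Qed.
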